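(* There exists a centrally essential ring containing a maximal right ideal which is not a two-sided ideal.
   Context: All rings are associative, unital and non-zero. $Z(A)$ denotes the center of a ring $A$. A ring $A$ is centrally essential if either $A$ is commutative or for every non-central element $a\in A$ there exist non-zero central elements $x,y\in Z(A)$ with $ax=y$. *)

From HB Require Import structures.
From mathcomp Require Import all_boot all_order all_algebra.
Set Implicit Arguments. Unset Strict Implicit. Unset Printing Implicit Defensive.
Import GRing.Theory.
Local Open Scope ring_scope.

Definition central (A : nzRingType) (x : A) : Prop := forall y : A, x * y = y * x.

Definition ring_commutative (A : nzRingType) : Prop := forall x y : A, x * y = y * x.

Definition centrally_essential (A : nzRingType) : Prop :=
  ring_commutative A \/
  (forall a : A, ~ central a ->
     exists x y : A, [/\ central x, central y, x != 0, y != 0 & a * x = y]).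

Definition additive_subgroup (A : nzRingType) (I : A -> Prop) : Prop :=
  I 0 /\ (forall x y, I x -> I y -> I (x - y)).

Definition right_ideal (A : nzRingType) (I : A -> Prop) : Prop :=
  additive_subgroup I /\ (forall x r : A, I x -> I (x * r)).

Definition left_ideal (A : nzRingType) (I : A -> Prop) : Prop :=
  additive_subgroup I /\ (forall x r : A, I x -> I (r * x)).

Definition two_sided_ideal (A : nzRingType) (I : A -> Prop) : Prop :=
  right_ideal I /\ left_ideal I.

Definition maximal_right_ideal (A : nzRingType) (I : A -> Prop) : Prop :=
  [/\ right_ideal I, (exists x, ~ I x) &
      forall J : A -> Prop, right_ideal J -> (forall x, I x -> J x) ->
        (forall x, J x -> I x) \/ (forall x, J x)].

From HB Require Import structures.
From mathcomp Require Import all_boot all_order all_algebra ring.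
From Stdlib Require Import Classical.

(* The ring is a quaternion-type algebra  A = quat s = R<u, v>  over a
   commutative ring R of characteristic 2: it is free over R with basis
   1, u, v, uv, where u^2 + s u + 1 = 0, v^2 = 1 and v u = (-s - u) v.
   - Since 2 = 0, an element a0 + a1 u + a2 v + a3 uv is central as soon as
     s kills a1, a2, a3 (quat_central).  So A is centrally essential when the
     annihilator of s is essential in R in the strong sense of
     [ann_essential]: every nonzero finite family can be multiplied by one
     scalar into Ann(s) without vanishing (quat_centrally_essential).
   - A ring morphism phi : R -> F_2 with phi s = 1 sends A onto the split
     algebra M_2(F_2); the preimage of a non-two-sided maximal right ideal is
     the [residue_ideal].  Its maximality rests on the anisotropy of the norm
     form x^2 + xy + y^2 of F_4/F_2 (F2_norm_form).
   - Both conditions hold for R = F_2[X] ⋉ F_2[X^-1], the idealization of the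
     module of inverse polynomials, with s = (X, 0) and phi evaluating the
     polynomial part at X = 1 (xi_ann_essential, residue_xi).  There, a
     nonzero family is first multiplied into the nilpotent part 0 ⋉ F_2[X^-1]
     (nil_multiple), on which s acts locally nilpotently (xi_exp_nil), and
     then by the last power of s that does not kill it (last_nonzero_power). *)

Set Implicit Arguments. Unset Strict Implicit. Unset Printing Implicit Defensive.
Import GRing.Theory.
Local Open Scope ring_scope.

Definition ann_essential (R : comNzRingType) (s : R) : Prop :=
  forall ms : seq R, has (fun m => m != 0) ms ->
  exists t, all (fun m => s * (m * t) == 0) ms && has (fun m => m * t != 0) ms.

Lemma last_nonzero_power (R : comNzRingType) (s : R) (ms : seq R) (n : nat) :
  all (fun m => s ^+ n * m == 0) ms -> has (fun m => m != 0) ms ->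
  exists k, all (fun m => s ^+ k.+1 * m == 0) ms && has (fun m => s ^+ k * m != 0) ms.
Proof.
move=> kill_n nz.
have nz0 : exists k, has (fun m => s ^+ k * m != 0) ms.
  by exists 0%N; under eq_has => m do rewrite expr0 mul1r.
have bound k : has (fun m => s ^+ k * m != 0) ms -> (k < n)%N.
  rewrite ltnNge; apply: contraL => /subnK <-; rewrite -all_predC.
  apply/allP => m /(allP kill_n) /eqP /= kill.
  by rewrite exprD -mulrA kill mulr0 eqxx.
have [k nzk maxk] := ex_maxnP nz0 (fun k hk => ltnW (bound k hk)).
exists k; rewrite nzk andbT -[all _ _]negbK -has_predC.
by apply/negP => /maxk; rewrite ltnn.
Qed.

(* The algebra quat s, with a0 + a1 u + a2 v + a3 uv stored as
   ((a0, a1), (a2, a3)); qmul is the multiplication table of the basis. *)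
Definition quat (R : comNzRingType) (s : R) : Type := ((R * R) * (R * R))%type.
HB.instance Definition _ (R : comNzRingType) (s : R) := GRing.Zmodule.on (quat s).

Definition mkQ (R : comNzRingType) (s : R) (a0 a1 a2 a3 : R) : quat s :=
  ((a0, a1), (a2, a3)).

Definition qmul (R : comNzRingType) (s : R) (a c : quat s) : quat s :=
  let: ((a0, a1), (a2, a3)) := a in
  let: ((c0, c1), (c2, c3)) := c in
  ((a0*c0 - a1*c1 + (a2*(c2 - s*c3) + a3*c3),
    a0*c1 + a1*c0 - s*a1*c1 + (- a2*c3 + a3*(c2 - s*c3) + s*a3*c3)),
   (a0*c2 - a1*c3 + (a2*(c0 - s*c1) + a3*c1),
    a0*c3 + a1*c2 - s*a1*c3 + (- a2*c1 + a3*(c0 - s*c1) + s*a3*c1))).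

Section QuatRing.
Variables (R : comNzRingType) (s : R).

Fact qmulA : associative (@qmul R s).
Proof.
move=> [[a0 a1] [a2 a3]] [[b0 b1] [b2 b3]] [[c0 c1] [c2 c3]] /=.
by congr ((_, _), (_, _)); rewrite /=; ring.
Qed.

Fact qmul1 : left_id (mkQ s 1 0 0 0) (@qmul R s).
Proof. by move=> [[a0 a1] [a2 a3]]; rewrite /mkQ /=; congr ((_, _), (_, _)); ring. Qed.

Fact qmulr1 : right_id (mkQ s 1 0 0 0) (@qmul R s).
Proof. by move=> [[a0 a1] [a2 a3]]; rewrite /mkQ /=; congr ((_, _), (_, _)); ring. Qed.

Fact qmulDl : left_distributive (@qmul R s) +%R.
Proof.
move=> [[a0 a1] [a2 a3]] [[b0 b1] [b2 b3]] [[c0 c1] [c2 c3]] /=.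
by congr ((_, _), (_, _)); rewrite /=; ring.
Qed.

Fact qmulDr : right_distributive (@qmul R s) +%R.
Proof.
move=> [[a0 a1] [a2 a3]] [[b0 b1] [b2 b3]] [[c0 c1] [c2 c3]] /=.
by congr ((_, _), (_, _)); rewrite /=; ring.
Qed.

Fact qone_neq0 : mkQ s 1 0 0 0 != 0.
Proof. by rewrite !xpair_eqE oner_eq0. Qed.

End QuatRing.

HB.instance Definition _ (R : comNzRingType) (s : R) :=
  GRing.Zmodule_isNzRing.Build (quat s) (@qmulA R s) (@qmul1 R s) (@qmulr1 R s)
    (@qmulDl R s) (@qmulDr R s) (@qone_neq0 R s).

Section QuatTheory.
Variables (R : comNzRingType) (s : R).
Local Notation mkQ := (@mkQ R s).

Lemma qmulE (a0 a1 a2 a3 c0 c1 c2 c3 : R) :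
  mkQ a0 a1 a2 a3 * mkQ c0 c1 c2 c3 = qmul (mkQ a0 a1 a2 a3) (mkQ c0 c1 c2 c3).
Proof. by []. Qed.

Lemma qsubE (a0 a1 a2 a3 c0 c1 c2 c3 : R) :
  mkQ a0 a1 a2 a3 - mkQ c0 c1 c2 c3 = mkQ (a0 - c0) (a1 - c1) (a2 - c2) (a3 - c3).
Proof. by []. Qed.

Lemma qeta (a : quat s) : a = mkQ a.1.1 a.1.2 a.2.1 a.2.2.
Proof. by case: a => [[? ?] [? ?]]. Qed.

Definition qscalar (t : R) : quat s := mkQ t 0 0 0.

Lemma mulq_scalar (a0 a1 a2 a3 t : R) :
  mkQ a0 a1 a2 a3 * qscalar t = mkQ (a0 * t) (a1 * t) (a2 * t) (a3 * t).
Proof. by rewrite qmulE /=; congr mkQ; ring. Qed.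

(* (d0 + d1 u) v * v * conj(d0 + d1 u) is the norm of d0 + d1 u, a scalar. *)
Lemma quat_norm (d0 d1 : R) :
  mkQ 0 0 d0 d1 * mkQ 0 0 1 0 * mkQ (d0 - s * d1) (- d1) 0 0 =
  qscalar (d0 * d0 - s * d0 * d1 + d1 * d1).
Proof. by rewrite !qmulE /=; congr mkQ; ring. Qed.

Lemma quat_commutator (a0 a1 a2 a3 c0 c1 c2 c3 : R) :
  mkQ a0 a1 a2 a3 * mkQ c0 c1 c2 c3 - mkQ c0 c1 c2 c3 * mkQ a0 a1 a2 a3 =
  mkQ ((s * a3) * c2 - (s * a2) * c3)
      (2 * (a3 * c2 - a2 * c3))
      (2 * (a3 * c1 - a1 * c3) - (s * a2) * c1 + (s * a1) * c2)
      (2 * (a1 * c2 - a2 * c1) - (s * a1) * c3 + (s * a3) * c1).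
Proof. by rewrite !qmulE qsubE /=; congr mkQ; ring. Qed.

End QuatTheory.

Section QuatCentre.
Variables (R : comNzRingType) (s : R).
Local Notation mkQ := (@mkQ R s).
Local Notation qscalar := (@qscalar R s).

Lemma quat_central (a0 a1 a2 a3 : R) : 2 = 0 :> R ->
  s * a1 = 0 -> s * a2 = 0 -> s * a3 = 0 -> central (mkQ a0 a1 a2 a3).
Proof.
move=> char2 h1 h2 h3 c; rewrite (qeta c); apply/eqP; rewrite -subr_eq0.
by rewrite quat_commutator h1 h2 h3 char2 !mul0r !(subr0, addr0).
Qed.

(* A non-central a has some a_i (i > 0) with s a_i != 0; an essential
   multiple t of (a1, a2, a3) gives central x = t and y = a t. *)
Lemma quat_centrally_essential :
  2 = 0 :> R -> ann_essential s -> centrally_essential (quat s).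
Proof.
move=> char2 ess; right; case=> [[a0 a1] [a2 a3]] noncentral.
have nz : has (fun m => m != 0) [:: a1; a2; a3].
  apply: contra_notT noncentral; rewrite /= orbF !negb_or !negbK.
  move=> /and3P[/eqP z1 /eqP z2 /eqP z3].
  by apply: quat_central => //; rewrite ?z1 ?z2 ?z3 mulr0.
have [t /andP[]] := ess _ nz; rewrite /= andbT orbF.
move=> /and3P[/eqP t1 /eqP t2 /eqP t3] nzt.
have y_nz : mkQ (a0 * t) (a1 * t) (a2 * t) (a3 * t) != 0.
  by apply: contraTneq nzt => -[_ -> -> ->]; rewrite eqxx.
exists (qscalar t), (mkQ (a0 * t) (a1 * t) (a2 * t) (a3 * t)); split => //.
- by apply: quat_central => //; rewrite mulr0.
- exact: quat_central.
- by apply: contraNneq y_nz => t0; rewrite -mulq_scalar t0 mulr0.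
- exact: mulq_scalar.
Qed.

End QuatCentre.

Lemma additive_subgroupD (A : nzRingType) (I : A -> Prop) (x y : A) :
  additive_subgroup I -> I x -> I y -> I (x + y).
Proof.
move=> [I0 IB] Ix Iy; have := IB x (0 - y) Ix (IB 0 y I0 Iy).
by rewrite sub0r opprK.
Qed.

Lemma F2_norm_form (u v : 'F_2) : (u != 0) || (v != 0) -> u * u - u * v + v * v = 1.
Proof.
have: [forall u : 'F_2, forall v : 'F_2,
         (u != 0) || (v != 0) ==> (u * u - u * v + v * v == 1)].
  by apply/forallP; case=> [[|[|//]]] ?; apply/forallP; case=> [[|[|//]]] ?.
by move=> /forallP/(_ u)/forallP/(_ v)/implyP uv /uv/eqP.
Qed.

Section ResidueIdeal.
Variables (R : comNzRingType) (s : R) (phi : {rmorphism R -> 'F_2}).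
Hypothesis phi_s : phi s = 1.
Local Notation mkQ := (@mkQ R s).
Local Notation qscalar := (@qscalar R s).

(* The preimage under phi of the right ideal of quat 1 over F_2 (a copy of
   M_2(F_2)) cut out by two linear equations on the coordinates. *)
Definition residue_ideal (a : quat s) : Prop :=
  phi a.2.1 = phi a.1.1 - phi a.1.2 /\ phi a.2.2 = - phi a.1.2.

Lemma residue_ideal_right : right_ideal residue_ideal.
Proof.
split; first split.
- by rewrite /residue_ideal /= rmorph0 subr0 oppr0.
- move=> [[a0 a1] [a2 a3]] [[c0 c1] [c2 c3]] [/= ha2 ha3] [/= hc2 hc3].
  by rewrite /residue_ideal /= !rmorphB ha2 ha3 hc2 hc3; split; ring.
move=> [[a0 a1] [a2 a3]] [[c0 c1] [c2 c3]] [/= ha2 ha3].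
rewrite /residue_ideal /= !(rmorphB, rmorphD, rmorphN, rmorphM) phi_s ha2 ha3.
by split; ring.
Qed.

Lemma residue_ideal_proper : ~ residue_ideal 1.
Proof. by rewrite /residue_ideal /= rmorph0 rmorph1 subr0 => -[]. Qed.

(* 1 + v lies in the ideal but u (1 + v) does not. *)
Lemma residue_ideal_not_left : ~ left_ideal residue_ideal.
Proof.
move=> [_ left_mul]; have /(left_mul _ (mkQ 0 1 0 0)) : residue_ideal (mkQ 1 0 1 0).
  by rewrite /residue_ideal /= rmorph0 rmorph1 subr0 oppr0.
rewrite qmulE /residue_ideal /= !(rmorphB, rmorphD, rmorphN, rmorphM) phi_s.
by rewrite rmorph0 rmorph1 => -[].
Qed.

Lemma residue_norm (d0 d1 : R) : (phi d0 != 0) || (phi d1 != 0) ->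
  phi (d0 * d0 - s * d0 * d1 + d1 * d1) = 1.
Proof. by move=> /F2_norm_form <-; rewrite !(rmorphD, rmorphN, rmorphM) phi_s mul1r. Qed.

(* A right ideal J containing the residue ideal and some a outside it is
   everything: modulo the residue ideal a is (d0 + d1 u) v with nonzero
   residue, whose norm N lies in J with phi N = 1, so 1 = (1 - N) + N. *)
Lemma residue_ideal_extension (J : quat s -> Prop) (a : quat s) :
  right_ideal J -> (forall x, residue_ideal x -> J x) -> J a -> ~ residue_ideal a ->
  J 1.
Proof.
case: a => [[a0 a1] [a2 a3]] [J_add J_mul] sub_J Ja Ma.
pose d0 := a2 - (a0 - s * a1); pose d1 := a3 + a1.
have Jd : J (mkQ 0 0 d0 d1).
  have -> : mkQ 0 0 d0 d1 = mkQ a0 a1 a2 a3 - mkQ a0 a1 (a0 - s * a1) (- a1).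
    by rewrite qsubE; congr mkQ; rewrite /d0 /d1; ring.
  apply: J_add.2 => //; apply: sub_J.
  by rewrite /residue_ideal /= !(rmorphB, rmorphN, rmorphM) phi_s mul1r.
pose N := d0 * d0 - s * d0 * d1 + d1 * d1.
have JN : J (qscalar N) by rewrite -quat_norm; apply/J_mul/J_mul.
have d_nz : (phi d0 != 0) || (phi d1 != 0).
  apply: contra_notT Ma; rewrite negb_or !negbK /d0 /d1.
  rewrite !(rmorphB, rmorphD, rmorphM) phi_s mul1r subr_eq0 addr_eq0.
  by move=> /andP[/eqP h2 /eqP h3].
have phiN : phi N = 1 := residue_norm d_nz.
rewrite -(subrK (qscalar N) 1); apply: additive_subgroupD => //; apply: sub_J.
by rewrite /residue_ideal /= subrr rmorphB rmorph1 phiN subrr rmorph0 oppr0 addr0.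
Qed.

Lemma residue_ideal_maximal : maximal_right_ideal residue_ideal.
Proof.
split; [exact: residue_ideal_right | by exists 1; apply: residue_ideal_proper |].
move=> J J_ideal sub_J.
case: (classic (forall x, J x -> residue_ideal x)) => [|not_sub]; [by left | right].
have [a a_out] := not_all_ex_not _ _ not_sub.
have [Ja Ma] := imply_to_and _ _ a_out.
have J1 := residue_ideal_extension J_ideal sub_J Ja Ma.
by move=> x; rewrite -(mul1r x); apply: J_ideal.2.
Qed.

End ResidueIdeal.

(* Inverse polynomials: a polynomial q stands for sum_i q_i X^-i, and p acts
   on it by multiplication followed by truncation of positive powers, so that
   X acts as the shift drop_poly 1.  This makes {poly R} a {poly R}-module. *)
Section InversePolynomials.
Variable R : comNzRingType.
Implicit Types p q : {poly R}.

Definition act p q : {poly R} := \sum_(i < size p) p`_i *: drop_poly i q.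

Lemma actE n p q : (size p <= n)%N -> act p q = \sum_(i < n) p`_i *: drop_poly i q.
Proof.
move=> hn; rewrite /act (big_ord_widen n (fun i => p`_i *: drop_poly i q)) //.
rewrite big_mkcond; apply: eq_bigr => i _; case: ifP => // /negbT.
by rewrite -leqNgt => h; rewrite nth_default // scale0r.
Qed.

Lemma drop_poly_drop a b q : drop_poly a (drop_poly b q) = drop_poly (a + b) q.
Proof. by apply/polyP => i; rewrite !coef_drop_poly addnA. Qed.

Lemma act0l q : act 0 q = 0.
Proof. by rewrite /act size_poly0 big_ord0. Qed.

Lemma act0r p : act p 0 = 0.
Proof. by rewrite /act big1 // => i _; rewrite drop_poly0r scaler0. Qed.

Lemma actDl p1 p2 q : act (p1 + p2) q = act p1 q + act p2 q.
Proof.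
set n := maxn (size p1) (size p2).
rewrite (actE q (size_polyD _ _)) (@actE n p1) ?leq_maxl // (@actE n p2) ?leq_maxr //.
by rewrite -big_split; apply: eq_bigr => i _; rewrite coefD scalerDl.
Qed.

Lemma actDr p q1 q2 : act p (q1 + q2) = act p q1 + act p q2.
Proof. by rewrite /act -big_split; apply: eq_bigr => i _; rewrite drop_polyD scalerDr. Qed.

Lemma act1 q : act 1 q = q.
Proof. by rewrite /act size_poly1 big_ord1 coefC /= scale1r drop_poly0l. Qed.

Lemma actCl c p q : act (c%:P * p) q = c *: act p q.
Proof.
rewrite mul_polyC (@actE (size p)) ?size_scale_leq // /act scaler_sumr.
by apply: eq_bigr => i _; rewrite coefZ scalerA.
Qed.

Lemma actXnl n q : act 'X^n q = drop_poly n q.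
Proof.
rewrite /act size_polyXn big_ord_recr /= big1 ?add0r; first by rewrite coefXn eqxx scale1r.
by move=> i _; rewrite coefXn ltn_eqF // scale0r.
Qed.

Lemma actMXl p q : act (p * 'X) q = act p (drop_poly 1 q).
Proof.
rewrite (@actE (size p).+1); last first.
  by rewrite (leq_trans (size_polyMleq _ _)) // size_polyX addn2.
rewrite big_ord_recl coefMX eqxx scale0r add0r /act; apply: eq_bigr => i _.
by rewrite coefMX /= drop_poly_drop addn1.
Qed.

Lemma drop_act p q : drop_poly 1 (act p q) = act p (drop_poly 1 q).
Proof.
rewrite /act drop_poly_sum; apply: eq_bigr => i _.
by rewrite drop_polyZ !drop_poly_drop addnC.
Qed.

Lemma actM p1 p2 q : act (p1 * p2) q = act p1 (act p2 q).
Proof.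
elim/poly_ind: p1 q => [|p c IH] q; first by rewrite mul0r !act0l.
rewrite mulrDl actDl -mulrA (mulrC 'X) mulrA actMXl IH actCl actDl actMXl drop_act.
by rewrite -[c%:P]mulr1 actCl act1.
Qed.

Lemma coef_actXn p m j :
  (act p 'X^m)`_j = if (j <= m)%N then p`_(m - j) else 0.
Proof.
rewrite /act coef_sum; under eq_bigr => i _ do rewrite coefZ coef_drop_poly coefXn.
case: leqP => hj.
  case: (ltnP (m - j) (size p)) => hs.
    rewrite (bigD1 (Ordinal hs)) //= subnKC // eqxx mulr1 big1 ?addr0 //.
    move=> i /eqP hi; case: eqP => [e|_]; last by rewrite mulr0.
    by case: hi; apply: val_inj => /=; rewrite -e addKn.
  rewrite nth_default // big1 // => i _; case: eqP => [e|_]; last by rewrite mulr0.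
  have ei : (i : nat) = (m - j)%N by rewrite -e addKn.
  by move: (ltn_ord i); rewrite ei ltnNge hs.
rewrite big1 // => i _; case: eqP => [e|_]; last by rewrite mulr0.
by move: hj; rewrite -e ltnNge leq_addr.
Qed.

End InversePolynomials.

(* The idealization {poly R} ⋉ {poly R} of the module of inverse polynomials:
   (p, q) (p', q') = (p p', p q' + p' q). *)
Definition idealization (R : comNzRingType) : Type := ({poly R} * {poly R})%type.
HB.instance Definition _ (R : comNzRingType) := GRing.Zmodule.on (idealization R).

Definition imul (R : comNzRingType) (x y : idealization R) : idealization R :=
  (x.1 * y.1, act x.1 y.2 + act y.1 x.2).

Section IdealizationRing.
Variable R : comNzRingType.

Fact imulA : associative (@imul R).
Proof.
move=> [p q] [p' q'] [p'' q'']; rewrite /imul /=; congr pair; first by rewrite mulrA.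
have actC (a b c : {poly R}) : act a (act b c) = act b (act a c) by rewrite -!actM mulrC.
by rewrite !actDr !actM (actC p'' p) (actC p'' p') addrA.
Qed.

Fact imulC : commutative (@imul R).
Proof. by move=> [p q] [p' q']; rewrite /imul /= mulrC addrC. Qed.

Fact imul1 : left_id ((1, 0) : idealization R) (@imul R).
Proof. by move=> [p q]; rewrite /imul /= mul1r act1 act0r addr0. Qed.

Fact imulDl : left_distributive (@imul R) +%R.
Proof.
move=> [p1 q1] [p2 q2] [p q]; rewrite /imul /=; congr pair; first by rewrite mulrDl.
by rewrite actDl actDr addrACA.
Qed.

Fact ione_neq0 : ((1, 0) : idealization R) != 0.
Proof. by rewrite xpair_eqE oner_eq0. Qed.

End IdealizationRing.

HB.instance Definition _ (R : comNzRingType) :=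
  GRing.Zmodule_isComNzRing.Build (idealization R)
    (@imulA R) (@imulC R) (@imul1 R) (@imulDl R) (@ione_neq0 R).

Definition residue (R : comNzRingType) (x : idealization R) : R := x.1.[1].

Fact residue_is_zmod_morphism (R : comNzRingType) : zmod_morphism (@residue R).
Proof. by move=> x y; rewrite /residue /= hornerD hornerN. Qed.

Fact residue_is_monoid_morphism (R : comNzRingType) : monoid_morphism (@residue R).
Proof. by split=> [|x y]; rewrite /residue /= ?hornerC // hornerM. Qed.

HB.instance Definition _ (R : comNzRingType) :=
  GRing.isZmodMorphism.Build _ _ (@residue R) (@residue_is_zmod_morphism R).
HB.instance Definition _ (R : comNzRingType) :=
  GRing.isMonoidMorphism.Build _ _ (@residue R) (@residue_is_monoid_morphism R).

Section Idealization.
Variable R : comNzRingType.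
Implicit Types (p q : {poly R}) (x : idealization R).

Lemma imulE x y : x * y = (x.1 * y.1, act x.1 y.2 + act y.1 x.2).
Proof. by []. Qed.

Lemma idealization_char2 : 2 = 0 :> R -> 2 = 0 :> idealization R.
Proof.
move=> char2; rewrite mulr2n.
change ((1 + 1 : {poly R}, 0 + 0 : {poly R}) = (0, 0)).
by rewrite addr0 -polyCD -mulr2n char2.
Qed.

Definition xi : idealization R := ('X, 0).

Lemma residue_xi : residue xi = 1.
Proof. exact: hornerX. Qed.

Lemma mul_xi p q : xi * ((p, q) : idealization R) = ('X * p, drop_poly 1 q).
Proof. by rewrite imulE /= act0r addr0 -(actXnl 1). Qed.

Lemma xi_exp_nil n q : xi ^+ n * ((0, q) : idealization R) = (0, drop_poly n q).
Proof.
elim: n => [|n IH]; first by rewrite expr0 mul1r drop_poly0l.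
by rewrite exprS -mulrA IH mul_xi mulr0 drop_poly_drop add1n.
Qed.

Lemma mul_socle p q v : ((p, q) : idealization R) * (0, 'X^v) = (0, act p 'X^v).
Proof. by rewrite imulE /= mulr0 act0l addr0. Qed.

(* Any nonzero family has a multiple inside 0 ⋉ {poly R} that is still
   nonzero: use (0, X^-v) with v the degree of a nonzero polynomial part. *)
Lemma nil_multiple (ms : seq (idealization R)) : has (fun m => m != 0) ms ->
  exists t, has (fun m => m * t != 0) ms && all (fun m => (m * t).1 == 0) ms.
Proof.
move=> nz; case: (boolP (all (fun m => m.1 == 0) ms)) => [nil | /allPn[[p0 q0] m0ms p0_nz]].
  by exists 1; under eq_has do rewrite mulr1; under eq_all do rewrite mulr1; rewrite nz.
exists (0, 'X^((size p0).-1)); apply/andP; split; last first.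
  by apply/allP => -[p q] _; rewrite mul_socle.
apply/hasP; exists (p0, q0) => //; rewrite mul_socle.
apply: contraTneq p0_nz => /(congr1 (fun x : idealization R => x.2`_0)) /=.
by rewrite coef_actXn leq0n subn0 coef0 -lead_coefE negbK => /eqP; rewrite lead_coef_eq0.
Qed.

(* Move the family into the nilpotent part, where xi^n kills it for n large,
   then multiply by the last power of xi that does not. *)
Lemma xi_ann_essential : ann_essential xi.
Proof.
move=> ms nz; have [t /andP[nzt nilt]] := nil_multiple nz.
pose ms1 := [seq m * t | m <- ms].
pose n := \max_(m <- ms1) size m.2.
have killed : all (fun m => xi ^+ n * m == 0) ms1.
  apply/allP => _ /mapP[m m_ms ->].
  have size_le : leq (size (m * t).2) n by apply: leq_bigmax_seq => //; apply: map_f.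
  move: size_le (allP nilt m m_ms); case: (m * t) => p q /= /subnK <- /eqP ->.
  by rewrite exprD -mulrA xi_exp_nil drop_poly_eq0 // mulr0.
have nz1 : has (fun m => m != 0) ms1 by rewrite has_map.
have [k /andP[zero nzk]] := last_nonzero_power killed nz1.
have reassoc m : m * (t * xi ^+ k) = xi ^+ k * (m * t) by rewrite mulrA mulrC.
exists (t * xi ^+ k); apply/andP; split.
  apply/allP => m m_ms; rewrite reassoc [xi * _]mulrA -exprS.
  exact: (allP zero _ (map_f _ m_ms)).
have [_ /mapP[m m_ms ->] nz_m] := hasP nzk.
by apply/hasP; exists m; rewrite ?reassoc.
Qed.

End Idealization.

Theorem theorem1p4 :
  exists (A : nzRingType) (I : A -> Prop),
    [/\ centrally_essential A, maximal_right_ideal I & ~ two_sided_ideal I].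
Proof.
pose s := @xi 'F_2.
exists (quat s), (residue_ideal (@residue 'F_2) : quat s -> Prop); split.
- apply: quat_centrally_essential; last exact: xi_ann_essential.
  by apply: idealization_char2; apply/eqP.
- exact: residue_ideal_maximal (residue_xi _).
- by move=> [_]; apply: residue_ideal_not_left (residue_xi _).
Qed.
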